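(* Let $G=(V,E)$ be a graph and $\mathcal{U}$ a set of utter cliques of $G$ such that $\bigcup_{[W,F]\in\mathcal{U}}E(W)=E$. Then the extended incidence vectors $(\chi^S,\zeta^{E(S)})$ of the co-2-plexes $S$ of $G$ are exactly the vectors $(x,y)\in\{0,1\}^V\times\{0,1\}^E$ satisfying $x(W)+y(F\cap E(V\setminus W))-y(E(W))\le 1$ for all $[W,F]\in\mathcal{U}$ and $y(\delta(v))\le x_v$ for all $v\in V$.
   Context: For $W\subseteq V$, $E(W)$ is the set of edges with both endpoints in $W$, $\delta(v)$ the set of edges incident to $v$, $x(A)=\sum_{a\in A}x_a$. A co-2-plex is a set $S\subseteq V$ such that $G[S]$ has maximum degree at most 1. The utter graph $u(G)$ has vertex set $V\cup E$, where two elements are adjacent iff: they are two adjacent vertices of $G$; or a vertex and an edge incident to it; or two edges sharing an endpoint; or a vertex $w$ and an edge $uv$ not containing $w$ with $wu\in E$ or $wv\in E$; or two disjoint edges $uv,xy$ such that some edge of $G$ joins $\{u,v\}$ to $\{x,y\}$. For $W\subseteq V$, $F\subseteq E$, $[W,F]$ is an utter clique if $W\cup F$ is a clique of $u(G)$. *)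

(* A graph G = (V,E) is a finite simple graph given by a
   symmetric irreflexive relation e on a finType T (= V). An edge is a
   2-element vertex set {u,v} with e u v. *)
From HB Require Import structures.
From mathcomp Require Import all_boot all_order all_algebra.
Set Implicit Arguments. Unset Strict Implicit. Unset Printing Implicit Defensive.
Import Order.TTheory GRing.Theory Num.Theory.

Section Graph.
Variables (T : finType) (e : rel T).

Definition is_edge (A : {set T}) : bool :=
  [exists u, exists v, e u v && (A == [set u; v])].

Definition edge : Type := {A : {set T} | is_edge A}.
HB.instance Definition _ := Finite.on edge.

Definition Eof (W : {set T}) : {set edge} := [set f : edge | val f \subset W].

Definition delta (v : T) : {set edge} := [set f : edge | v \in val f].

Definition co2plex (S : {set T}) : Prop :=
  forall v, v \in S -> #|[set u in S | e v u]| <= 1.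

Definition utter_adj (a b : T + edge) : bool :=
  match a, b with
  | inl u, inl v => e u v
  | inl w, inr f | inr f, inl w =>
      (w \in val f) || ((w \notin val f) && [exists u in val f, e w u])
  | inr f, inr g =>
      (f != g) &&
      ([exists u, (u \in val f) && (u \in val g)] ||
       ([disjoint val f & val g] &&
        [exists u in val f, exists x in val g, e u x]))
  end.

Definition utter_clique (W : {set T}) (F : {set edge}) : Prop :=
  forall a b : T + edge,
    match a with inl v => v \in W | inr f => f \in F end ->
    match b with inl v => v \in W | inr f => f \in F end ->
    a != b -> utter_adj a b.

Definition chi (S : {set T}) : {ffun T -> int} := [ffun v => Posz (v \in S : nat)].
Definition zeta (A : {set edge}) : {ffun edge -> int} :=
  [ffun f => Posz (f \in A : nat)].

End Graph.

(* For a co-2-plex S the edge set E(S) is a matching.  If [W,F] is an utter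
   clique, W is a clique of G, so W :&: S has at most two vertices and, if two,
   they span an edge of E(S).  Two distinct edges of E(S) are never adjacent in
   u(G), and neither is a vertex of S and an edge of E(S) avoiding it: either
   adjacency produces two matching edges sharing a vertex.  So F meets
   E(S) :&: E(V \ W) in at most one edge, and in none when W meets S; this gives
   the clique inequality.
   Conversely, with S and Y the supports of x and y, the degree inequalities say
   that Y is a matching inside G[S].  An edge f of G[S] lies in some E(W) with
   [W,F] in U; then |W :&: S| >= 2 while 2 |E(W) :&: Y| <= |W :&: S|, so the
   clique inequality forces W :&: S = f and f in Y.  Hence Y = E(S) is a
   matching, i.e. S is a co-2-plex. *)

From HB Require Import structures.
From mathcomp Require Import all_boot all_order all_algebra zify.
Import Order.TTheory GRing.Theory Num.Theory.
Set Implicit Arguments. Unset Strict Implicit. Unset Printing Implicit Defensive.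

Lemma ffun01_chi (I : finType) (x : {ffun I -> int}) :
  (forall i, x i = 0 \/ x i = 1)%R -> exists S : {set I}, x = chi S.
Proof.
move=> x01; exists [set i | x i == 1%R]; apply/ffunP => i.
by rewrite !ffunE inE; case: (x01 i) => ->.
Qed.

Lemma sum_chi (I : finType) (A B : {set I}) :
  (\sum_(i in A) chi B i)%R = Posz #|A :&: B|.
Proof.
rewrite -sum1_card (big_morph Posz PoszD (erefl (Posz 0))) big_mkcond [RHS]big_mkcond.
by apply: eq_bigr => i _; rewrite ffunE inE; case: (i \in A); case: (i \in B).
Qed.

Section Graph.
Variables (T : finType) (e : rel T).
Hypotheses (e_sym : symmetric e) (e_irr : irreflexive e).

Lemma is_edge2 u v : e u v -> is_edge e [set u; v].
Proof. by move=> euv; apply/existsP; exists u; apply/existsP; exists v; rewrite euv eqxx. Qed.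

Definition mkedge u v (euv : e u v) : edge e := exist _ [set u; v] (is_edge2 euv).

Lemma edgeP (f : edge e) : exists u v, e u v /\ val f = [set u; v].
Proof. by case: f => A /= /existsP[u /existsP[v /andP[euv /eqP->]]]; exists u, v. Qed.

Lemma edge_other v (f : edge e) : v \in val f -> exists u, e v u /\ val f = [set v; u].
Proof.
have [a [b [eab ->]]] := edgeP f.
rewrite !inE => /orP[]/eqP->; first by exists b.
by exists a; rewrite e_sym eab setUC.
Qed.

Lemma card_edge (f : edge e) : #|val f| = 2.
Proof.
have [a [b [eab ->]]] := edgeP f; rewrite cards2.
by case: eqP eab => [->|//]; rewrite e_irr.
Qed.

Lemma edge_eq_sub (f : edge e) (A : {set T}) :
  val f \subset A -> #|A| <= 2 -> val f = A.
Proof. by move=> fA A2; apply/eqP; rewrite eqEcard fA card_edge. Qed.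

Lemma EofI A B : Eof e (A :&: B) = Eof e A :&: Eof e B.
Proof. by apply/setP => f; rewrite !inE subsetI. Qed.

Definition matching (Y : {set edge e}) : Prop :=
  forall v, #|delta e v :&: Y| <= 1.

Lemma matching_uniq Y v f g : matching Y ->
  f \in Y -> g \in Y -> v \in val f -> v \in val g -> f = g.
Proof. by move=> /(_ v)/card_le1_eqP M fY gY vf vg; apply: M; rewrite !inE ?fY ?vf ?gY ?vg. Qed.

Lemma matching_card_Eof Y W : matching Y -> 2 * #|Eof e W :&: Y| <= #|W|.
Proof.
move=> M; set Z := Eof e W :&: Y; pose P := [set val g | g in Z].
have tP : trivIset P.
  apply/trivIsetP => _ _ /imsetP[f fZ ->] /imsetP[g gZ ->] fg.
  apply/pred0P => v /=; apply/negP => /andP[vf vg].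
  move: fZ gZ; rewrite !inE => /andP[_ fY] /andP[_ gY].
  by move: fg; rewrite (matching_uniq M fY gY vf vg) eqxx.
have <- : #|cover P| = 2 * #|Z|.
  rewrite -(eqP tP) (eq_bigr (fun _ => 2)); last by move=> _ /imsetP[g _ ->]; rewrite card_edge.
  by rewrite sum_nat_const card_imset 1?mulnC //; apply: val_inj.
apply/subset_leq_card/subsetP => v /bigcupP[_ /imsetP[g gZ ->]].
by move: gZ; rewrite !inE => /andP[/subsetP gW _] /gW.
Qed.

Lemma delta_Eof_notin (S : {set T}) v : v \notin S -> delta e v :&: Eof e S = set0.
Proof.
move=> vNS; apply/setP => f; rewrite !inE; apply/negbTE/negP => /andP[vf /subsetP fS].
by rewrite fS in vNS.
Qed.

Lemma co2plex_matching (S : {set T}) : co2plex e S <-> matching (Eof e S).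
Proof.
split=> [S2 v | M v vS].
  have [vS | /delta_Eof_notin-> //] := boolP (v \in S); last by rewrite cards0.
  apply/card_le1_eqP => f g; rewrite !inE => /andP[vf fS] /andP[vg gS].
  have [a [eva ef]] := edge_other vf; have [b [evb eg]] := edge_other vg.
  have nbr_uniq : forall u, u \in [set u in S | e v u] -> u = a.
    move=> u; apply: (card_le1_eqP (S2 v vS)).
    by rewrite inE eva (subsetP fS) // ef !inE eqxx orbT.
  apply: val_inj; rewrite ef eg (nbr_uniq b) // inE evb.
  by rewrite (subsetP gS) // eg !inE eqxx orbT.
apply/card_le1_eqP => a b; rewrite !inE => /andP[aS eva] /andP[bS evb].
have inEof u (evu : e v u) : u \in S -> mkedge evu \in Eof e S.
  by move=> uS; rewrite inE subUset !sub1set vS uS.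
have /(congr1 val)/= := matching_uniq M (inEof _ eva aS) (inEof _ evb bS) (set21 v a) (set21 v b).
move/setP/(_ a); rewrite !inE eqxx orbT => /esym/orP[/eqP av | /eqP //].
by rewrite av e_irr in eva.
Qed.

Lemma card_delta_Eof (S : {set T}) v : co2plex e S -> #|delta e v :&: Eof e S| <= (v \in S).
Proof.
move=> /co2plex_matching M; have [//|/delta_Eof_notin->] := boolP (v \in S).
by rewrite cards0.
Qed.

Section UtterCliqueCo2plex.
Variables (S W : {set T}) (F : {set edge e}).
Hypotheses (S2 : co2plex e S) (WF : utter_clique W F).

Let M : matching (Eof e S) := iffLR (co2plex_matching S) S2.

Let W_clique a b : a \in W -> b \in W -> a != b -> e a b.
Proof. exact: (@WF (inl a) (inl b)). Qed.

Lemma card_utter_clique_co2plex : #|W :&: S| <= 2.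
Proof.
have [->|[a aWS]] := set_0Vmem (W :&: S); first by rewrite cards0.
move: (aWS); rewrite inE => /andP[aW aS].
rewrite (cardsD1 a) aWS ltnS; apply: leq_trans (S2 aS).
apply/subset_leq_card/subsetP => u; rewrite !inE => /andP[ua /andP[uW ->]].
by rewrite W_clique // eq_sym.
Qed.

Lemma utter_clique_co2plex_edge :
  1 < #|W :&: S| -> 0 < #|Eof e W :&: Eof e S|.
Proof.
case/card_gt1P => a [b [+ + ab]]; rewrite !inE => /andP[aW aS] /andP[bW bS].
apply/card_gt0P; exists (mkedge (W_clique aW bW ab)).
by rewrite !inE !subUset !sub1set aW bW aS bS.
Qed.

Lemma card_utter_outer_co2plex : #|F :&: Eof e (~: W) :&: Eof e S| <= 1.
Proof.
apply/card_le1_eqP => f g; rewrite !in_setI => /andP[/andP[fF _] fS] /andP[/andP[gF _] gS].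
apply/eqP/contraT; rewrite eq_sym => fg.
have /andP[_ /orP[/existsP[u /andP[uf ug]] | /andP[fg_dis]]] := @WF (inr f) (inr g) fF gF fg.
  by rewrite (matching_uniq M fS gS uf ug) eqxx in fg.
case/existsP => u /andP[uf /existsP[w /andP[wg euw]]].
have uwS : mkedge euw \in Eof e S.
  by move: fS gS; rewrite !inE subUset !sub1set => /subsetP-> // /subsetP->.
have f_uw := matching_uniq M fS uwS uf (set21 u w).
by move: (disjointFl fg_dis wg); rewrite f_uw /= set22.
Qed.

Lemma utter_outer_co2plex_eq0 :
  0 < #|W :&: S| -> #|F :&: Eof e (~: W) :&: Eof e S| = 0.
Proof.
case/card_gt0P => w; rewrite inE => /andP[wW wS]; apply/eqP; rewrite cards_eq0.
apply/eqP/setP => f; rewrite in_set0 !in_setI; apply/negbTE/negP => /andP[/andP[fF]].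
rewrite inE => /subsetP fW fS.
have w_out : w \notin val f by apply: contraL wW => /fW; rewrite inE.
have /orP[wf | /andP[_ /existsP[u /andP[uf ewu]]]] := @WF (inl w) (inr f) wW fF isT.
  by rewrite wf in w_out.
have wuS : mkedge ewu \in Eof e S.
  by move: fS; rewrite !inE subUset !sub1set wS => /subsetP->.
by rewrite (matching_uniq M fS wuS uf (set22 w u)) /= set21 in w_out.
Qed.

Lemma utter_clique_co2plex_ineq :
  #|W :&: S| + #|F :&: Eof e (~: W) :&: Eof e S| <= #|Eof e W :&: Eof e S| + 1.
Proof.
have := card_utter_clique_co2plex; have := utter_clique_co2plex_edge.
have := card_utter_outer_co2plex; have := utter_outer_co2plex_eq0.
lia.
Qed.

End UtterCliqueCo2plex.

Section DegreeBound.
Variables (S : {set T}) (Y : {set edge e}).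
Hypothesis Y_deg : forall v, #|delta e v :&: Y| <= (v \in S).

Lemma degree_bound_matching : matching Y.
Proof. by move=> v; apply: leq_trans (Y_deg v) _; apply: leq_b1. Qed.

Lemma degree_bound_sub_Eof : Y \subset Eof e S.
Proof.
apply/subsetP => f fY; rewrite inE; apply/subsetP => v vf.
have : 0 < #|delta e v :&: Y| by apply/card_gt0P; exists f; rewrite !inE vf.
by move/leq_trans/(_ (Y_deg v)); rewrite lt0b.
Qed.

End DegreeBound.

Lemma matching_clique_edge (S W : {set T}) (Y : {set edge e}) f :
  matching Y -> Y \subset Eof e S -> f \in Eof e W :&: Eof e S ->
  #|W :&: S| <= #|Eof e W :&: Y| + 1 -> f \in Y.
Proof.
move=> M YS; rewrite -EofI inE => fWS WS_le.
have WS2 : 2 <= #|W :&: S| by rewrite -(card_edge f) subset_leq_card.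
have match_le : 2 * #|Eof e W :&: Y| <= #|W :&: S|.
  by rewrite -(setIidPr YS) setIA -EofI; apply: matching_card_Eof.
have [WS_le2 /card_gt0P[g /setIP[gW gY]]] : #|W :&: S| <= 2 /\ 0 < #|Eof e W :&: Y|.
  by move: WS2 WS_le match_le; lia.
have : g \in Eof e (W :&: S) by rewrite EofI inE gW (subsetP YS).
rewrite inE => gWS; suff -> : f = g by [].
by apply: val_inj; rewrite (edge_eq_sub fWS WS_le2) (edge_eq_sub gWS WS_le2).
Qed.

End Graph.

Local Open Scope ring_scope.

Theorem mainTheorem15 (T : finType) (e : rel T)
  (e_sym : symmetric e) (e_irr : irreflexive e)
  (U : {set {set T} * {set edge e}})
  (hU : forall p, p \in U -> utter_clique p.1 p.2)
  (hcov : \bigcup_(p in U) Eof e p.1 = [set: edge e])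
  (x : {ffun T -> int}) (y : {ffun edge e -> int})
  (hx : forall v, x v = 0 \/ x v = 1)
  (hy : forall f, y f = 0 \/ y f = 1) :
  (exists S : {set T}, co2plex e S /\ x = chi S /\ y = zeta (Eof e S)) <->
  ((forall p, p \in U ->
      \sum_(v in p.1) x v + \sum_(f in p.2 :&: Eof e (~: p.1)) y f
        - \sum_(f in Eof e p.1) y f <= 1) /\
   (forall v, \sum_(f in delta e v) y f <= x v)).
Proof.
split=> [[S [S2 [-> ->]]] | ].
  split=> [p /hU WF | v]; rewrite !sum_chi.
  - by have := utter_clique_co2plex_ineq e_sym e_irr S2 WF; lia.
  - by rewrite ffunE; have := card_delta_Eof e_sym e_irr v S2; lia.
have [S ->] := ffun01_chi hx; have [Y ->] := ffun01_chi hy.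
move=> [clique_ineq deg_ineq].
have Y_deg v : (#|delta e v :&: Y| <= (v \in S))%N.
  by move: (deg_ineq v); rewrite sum_chi ffunE lez_nat.
have clique_le p : p \in U -> (#|p.1 :&: S| <= #|Eof e p.1 :&: Y| + 1)%N.
  by move=> /clique_ineq; rewrite !sum_chi; lia.
have YS := degree_bound_sub_Eof Y_deg.
have EofS_Y : Eof e S \subset Y.
  apply/subsetP => f fS.
  have /bigcupP[p pU fW] : f \in \bigcup_(p in U) Eof e p.1 by rewrite hcov inE.
  apply: (matching_clique_edge e_irr (degree_bound_matching Y_deg) YS _ (clique_le p pU)).
  by rewrite inE fW fS.
have Y_Eof : Y = Eof e S by apply/eqP; rewrite eqEsubset YS EofS_Y.
exists S; split; last by rewrite Y_Eof.
by apply/(co2plex_matching e_sym e_irr); rewrite -Y_Eof; apply: degree_bound_matching Y_deg.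
Qed.
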